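(* Assume $h_0=0$. Then the unique minimizer $\pi^*$ of $\pi\mapsto\max_{(\mu,\sigma)\in D}F(\pi,\mu,\sigma)$ is $$\pi^*=\begin{cases}\dfrac{h_1\sigma_-}{\sigma_-^2+\mu_+^2},&\text{if } \sigma_+\sigma_--2\mu_+^2\le\sigma_-^2,\\[2mm] \dfrac{h_1}{\sigma_M},&\text{if } \sigma_-^2<\sigma_+\sigma_--2\mu_+^2.\end{cases}$$ Moreover, the minimum of $\psi$ over $D$ is attained on the side $\{x=\mu_+\}$ of $D$.
   Context: Let $0<\mu_-<\mu_+$ and $0<\sigma_-<\sigma_+$ be real numbers, $D=[\mu_-,\mu_+]\times[\sigma_-,\sigma_+]$, and $h_0,h_1\in\mathbb R$. For $\pi\in\mathbb R$ and $(\mu,\sigma)\in D$ put $F(\pi,\mu,\sigma)=(h_0-\pi\mu)^2+(h_1-\pi\sigma)^2$. Write $\mu_M=(\mu_++\mu_-)/2$ and $\sigma_M=(\sigma_++\sigma_-)/2$. For $(x,y)\in D$ let $$\psi(x,y)=\frac{(h_0x+h_1y)^2}{2\mu_Mx+2\sigma_My-\mu_-\mu_+-\sigma_-\sigma_+}.$$ *)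

From Stdlib Require Import Reals ClassicalEpsilon.
Open Scope R_scope.

Definition inD (mum mup sgm sgp mu sg : R) : Prop :=
  mum <= mu <= mup /\ sgm <= sg <= sgp.

Definition F (h0 h1 pi mu sg : R) : R :=
  (h0 - pi * mu) ^ 2 + (h1 - pi * sg) ^ 2.

Definition is_max_F (mum mup sgm sgp h0 h1 pi m : R) : Prop :=
  (exists mu sg, inD mum mup sgm sgp mu sg /\ F h0 h1 pi mu sg = m) /\
  (forall mu sg, inD mum mup sgm sgp mu sg -> F h0 h1 pi mu sg <= m).

(* G(pi) = max_{(mu,sigma) in D} F(pi,mu,sigma), chosen by Hilbert epsilon
   (the maximum exists since D is compact and F continuous). *)
Definition Fmax (mum mup sgm sgp h0 h1 pi : R) : R :=
  epsilon (inhabits 0) (is_max_F mum mup sgm sgp h0 h1 pi).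

Definition unique_minimizer (mum mup sgm sgp h0 h1 p : R) : Prop :=
  (forall pi, Fmax mum mup sgm sgp h0 h1 p <= Fmax mum mup sgm sgp h0 h1 pi) /\
  (forall q, (forall pi, Fmax mum mup sgm sgp h0 h1 q <= Fmax mum mup sgm sgp h0 h1 pi) ->
             q = p).

Definition muM (mum mup : R) : R := (mup + mum) / 2.
Definition sgM (sgm sgp : R) : R := (sgp + sgm) / 2.

Definition psi (mum mup sgm sgp h0 h1 x y : R) : R :=
  (h0 * x + h1 * y) ^ 2 /
  (2 * muM mum mup * x + 2 * sgM sgm sgp * y - mum * mup - sgm * sgp).

From Stdlib Require Import Reals Lra Psatz Ranalysis ClassicalEpsilon.
Open Scope R_scope.

(* When h0 = 0, F(pi,mu,sigma) = (pi mu)^2 + (h1 - pi sigma)^2 is largest at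
   mu = mu_+ and, being convex in sigma, at an end of [sigma_-,sigma_+]; hence
   Fmax pi = max(F(pi,mu_+,sigma_-), F(pi,mu_+,sigma_+)), a maximum of two
   parabolas in pi.  Expanding each parabola around the candidate point shows:
   - in the first case the sigma_- parabola has its vertex at the candidate
     and dominates the other one there;
   - in the second case both parabolas agree at h1/sigma_M and have slopes of
     opposite signs there, so the maximum grows in both directions.
   For psi with h0 = 0 the numerator does not depend on x while the
   denominator is positive on D and increasing in x, so psi(mu_+, y) bounds
   psi(x, y) from below; a minimizer of the continuous function y |-> psi(mu_+,y)
   on [sigma_-,sigma_+] then minimizes psi on all of D. *)

Section MaximumOverD.
Variables (mum mup sgm sgp h0 h1 : R).

Lemma Fmax_spec pi m :
  is_max_F mum mup sgm sgp h0 h1 pi m -> Fmax mum mup sgm sgp h0 h1 pi = m.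
Proof.
  intros Hm; unfold Fmax.
  destruct (epsilon_spec (inhabits 0) (is_max_F mum mup sgm sgp h0 h1 pi)
    (ex_intro _ m Hm)) as [[mu [sg [Hin Heq]]] Hbound].
  destruct Hm as [[mu' [sg' [Hin' Heq']]] Hbound'].
  apply Rle_antisym.
  - rewrite <- Heq; apply Hbound'; exact Hin.
  - rewrite <- Heq'; apply Hbound; exact Hin'.
Qed.

Lemma unique_minimizer_of_strict p :
  (forall pi, pi <> p ->
     Fmax mum mup sgm sgp h0 h1 p < Fmax mum mup sgm sgp h0 h1 pi) ->
  unique_minimizer mum mup sgm sgp h0 h1 p.
Proof.
  intros Hstrict; split.
  - intros pi; destruct (Req_dec pi p) as [-> | Hne].
    + apply Rle_refl.
    + left; apply Hstrict; exact Hne.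
  - intros q Hq; destruct (Req_dec q p) as [| Hne]; [assumption |].
    specialize (Hq p); specialize (Hstrict q Hne); lra.
Qed.

End MaximumOverD.

(* A square (c - t)^2 is convex in t, so on a segment it is maximal at an end. *)
Lemma sq_le_max_ends c a b t :
  a <= t <= b -> (c - t) ^ 2 <= Rmax ((c - a) ^ 2) ((c - b) ^ 2).
Proof.
  intros Ht; destruct (Rle_dec t c).
  - eapply Rle_trans; [| apply Rmax_l]; nra.
  - eapply Rle_trans; [| apply Rmax_r]; nra.
Qed.

Lemma F_increment h1 m s pi p :
  F 0 h1 pi m s - F 0 h1 p m s =
  (m ^ 2 + s ^ 2) * (pi - p) ^ 2 + 2 * (pi - p) * (p * (m ^ 2 + s ^ 2) - h1 * s).
Proof. unfold F; ring. Qed.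

Lemma sq_diff_pos x y : x <> y -> 0 < (x - y) ^ 2.
Proof. intros Hne; rewrite <- Rsqr_pow2; apply Rsqr_pos_lt; lra. Qed.

(* If h1 = c s, the parabola pi |-> F(pi,m,sg) has slope proportional to
   c (m^2 + sg^2 - s sg) at c; moving from c in a direction in which this
   slope is nonnegative strictly increases it. *)
Lemma F_rises_from h1 m sg s c pi :
  0 < m -> h1 = c * s -> pi <> c ->
  0 <= c * (pi - c) * (m ^ 2 + sg ^ 2 - s * sg) ->
  F 0 h1 c m sg < F 0 h1 pi m sg.
Proof.
  intros Hm Hc Hne Hslope.
  pose proof (F_increment h1 m sg pi c) as Hinc.
  assert (Hlin : c * (m ^ 2 + sg ^ 2) - h1 * sg = c * (m ^ 2 + sg ^ 2 - s * sg))
    by (rewrite Hc; ring).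
  assert (Hk : 0 < m ^ 2 + sg ^ 2)
    by (pose proof (pow_lt m 2 Hm); pose proof (pow2_ge_0 sg); lra).
  pose proof (Rmult_lt_0_compat _ _ Hk (sq_diff_pos pi c Hne)).
  rewrite Hlin in Hinc; lra.
Qed.

Section ZeroDrift.
Variables (mum mup sgm sgp h1 : R).
Hypotheses (Hmu0 : 0 < mum) (Hmu : mum < mup) (Hsg0 : 0 < sgm) (Hsg : sgm < sgp).

Let Flo (pi : R) : R := F 0 h1 pi mup sgm.
Let Fhi (pi : R) : R := F 0 h1 pi mup sgp.

(* Each value of F(pi,.,.) on D is bounded by one of the two corner values:
   |pi mu| <= |pi mu_+| and pi sigma lies between pi sigma_- and pi sigma_+. *)
Lemma F_le_corners pi mu sg :
  inD mum mup sgm sgp mu sg -> F 0 h1 pi mu sg <= Rmax (Flo pi) (Fhi pi).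
Proof.
  intros [[Hmu1 Hmu2] [Hsg1 Hsg2]].
  assert (Hmu_sq : (0 - pi * mu) ^ 2 <= (0 - pi * mup) ^ 2).
  { assert (mu * mu <= mup * mup) by nra; assert (0 <= pi * pi) by nra; nra. }
  assert (Hsg_sq : (h1 - pi * sg) ^ 2
                   <= Rmax ((h1 - pi * sgm) ^ 2) ((h1 - pi * sgp) ^ 2)).
  { destruct (Rle_dec 0 pi).
    - apply sq_le_max_ends; split; nra.
    - rewrite Rmax_comm; apply sq_le_max_ends; split; nra. }
  unfold Flo, Fhi, F; unfold Rmax in *.
  destruct (Rle_dec _ _); destruct (Rle_dec _ _); lra.
Qed.

Lemma Fmax_corners pi :
  Fmax mum mup sgm sgp 0 h1 pi = Rmax (Flo pi) (Fhi pi).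
Proof.
  apply Fmax_spec; split.
  - unfold Rmax; destruct (Rle_dec (Flo pi) (Fhi pi)).
    + exists mup, sgp; split; [unfold inD; lra | reflexivity].
    + exists mup, sgm; split; [unfold inD; lra | reflexivity].
  - apply F_le_corners.
Qed.

(* First case: the vertex of the sigma_- parabola, where it dominates. *)
Lemma minimizer_vertex :
  sgp * sgm - 2 * mup ^ 2 <= sgm ^ 2 ->
  unique_minimizer mum mup sgm sgp 0 h1 (h1 * sgm / (sgm ^ 2 + mup ^ 2)).
Proof.
  intros Hcase.
  assert (Hk : 0 < mup ^ 2 + sgm ^ 2)
    by (pose proof (pow_lt sgm 2 Hsg0); pose proof (pow2_ge_0 mup); lra).
  set (p := h1 * sgm / (sgm ^ 2 + mup ^ 2)).
  assert (Hvertex : p * (mup ^ 2 + sgm ^ 2) = h1 * sgm) by (unfold p; field; lra).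
  assert (Hdom : Fhi p <= Flo p).
  { assert (Hgap : sgm * (Flo p - Fhi p)
                   = (sgp - sgm) * p ^ 2 * (sgm ^ 2 + 2 * mup ^ 2 - sgp * sgm)).
    { transitivity ((sgp - sgm) * p * (2 * (h1 * sgm) - sgm * p * (sgm + sgp)));
        [unfold Flo, Fhi, F; ring | rewrite <- Hvertex; ring]. }
    assert (0 <= (sgp - sgm) * p ^ 2 * (sgm ^ 2 + 2 * mup ^ 2 - sgp * sgm)).
    { apply Rmult_le_pos; [| lra]; apply Rmult_le_pos; [lra | apply pow2_ge_0]. }
    nra. }
  apply unique_minimizer_of_strict; intros pi Hne.
  rewrite !Fmax_corners, (Rmax_left _ _ Hdom).
  eapply Rlt_le_trans; [| apply Rmax_l].
  set (s := (mup ^ 2 + sgm ^ 2) / sgm).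
  assert (Hflat : mup ^ 2 + sgm ^ 2 - s * sgm = 0) by (unfold s; field; lra).
  apply (F_rises_from h1 mup sgm s); [lra | | exact Hne |].
  - unfold p, s; field; lra.
  - rewrite Hflat, Rmult_0_r; apply Rle_refl.
Qed.

(* Second case: both parabolas agree at h1/sigma_M and have slopes of
   opposite signs there, so their maximum increases on both sides. *)
Lemma minimizer_kink :
  sgm ^ 2 < sgp * sgm - 2 * mup ^ 2 ->
  unique_minimizer mum mup sgm sgp 0 h1 (h1 / sgM sgm sgp).
Proof.
  intros Hcase; set (s := sgM sgm sgp).
  assert (Hs : s = (sgp + sgm) / 2) by reflexivity.
  assert (Hs0 : 0 < s) by lra.
  set (c := h1 / s).
  assert (Hc : h1 = c * s) by (unfold c; field; lra).
  clearbody c s.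
  assert (Hbalance : Flo c = Fhi c).
  { unfold Flo, Fhi, F; rewrite Hc, Hs; field. }
  assert (Hslope_lo : mup ^ 2 + sgm ^ 2 - s * sgm < 0) by (rewrite Hs; nra).
  assert (Hslope_hi : 0 < mup ^ 2 + sgp ^ 2 - s * sgp) by (rewrite Hs; nra).
  apply unique_minimizer_of_strict; intros pi Hne.
  rewrite !Fmax_corners, <- Hbalance, Rmax_left by lra.
  assert (Hmup : 0 < mup) by lra.
  destruct (Rle_dec 0 (c * (pi - c))) as [Hup | Hdown].
  - eapply Rlt_le_trans; [| apply Rmax_r]; rewrite Hbalance.
    apply (F_rises_from h1 mup sgp s); [exact Hmup | exact Hc | exact Hne | nra].
  - eapply Rlt_le_trans; [| apply Rmax_l].
    apply (F_rises_from h1 mup sgm s); [exact Hmup | exact Hc | exact Hne | nra].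
Qed.

(* The denominator of psi is positive on D: it equals
   x^2 + y^2 + (x - mu_-)(mu_+ - x) + (y - sigma_-)(sigma_+ - y). *)
Lemma psi_denominator_pos x y :
  inD mum mup sgm sgp x y ->
  0 < 2 * muM mum mup * x + 2 * sgM sgm sgp * y - mum * mup - sgm * sgp.
Proof. intros [Hx Hy]; unfold muM, sgM; nra. Qed.

(* With h0 = 0 the numerator of psi ignores x and the denominator increases
   with x, so moving to the side x = mu_+ can only decrease psi. *)
Lemma psi_le_on_side x y :
  inD mum mup sgm sgp x y ->
  psi mum mup sgm sgp 0 h1 mup y <= psi mum mup sgm sgp 0 h1 x y.
Proof.
  intros Hxy; pose proof Hxy as [Hx Hy].
  assert (Hside : inD mum mup sgm sgp mup y) by (unfold inD; lra).
  unfold psi, Rdiv; rewrite !Rmult_0_l, !Rplus_0_l.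
  apply Rmult_le_compat_l; [apply pow2_ge_0 |].
  apply Rinv_le_contravar; [apply psi_denominator_pos; exact Hxy |].
  unfold muM; nra.
Qed.

Lemma psi_side_minimum :
  exists y, sgm <= y <= sgp /\
    forall y', sgm <= y' <= sgp ->
      psi mum mup sgm sgp 0 h1 mup y <= psi mum mup sgm sgp 0 h1 mup y'.
Proof.
  destruct (continuity_ab_min (fun y => psi mum mup sgm sgp 0 h1 mup y) sgm sgp)
    as [y [Hmin Hy]].
  - lra.
  - intros y Hy; unfold psi; apply continuity_pt_div; [reg | reg |].
    assert (Hside : inD mum mup sgm sgp mup y) by (unfold inD; lra).
    pose proof (psi_denominator_pos mup y Hside); lra.
  - exists y; split; [exact Hy | exact Hmin].
Qed.

End ZeroDrift.

Theorem mainTheorem9 (mum mup sgm sgp h0 h1 : R)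
  (Hmu0 : 0 < mum) (Hmu : mum < mup) (Hsg0 : 0 < sgm) (Hsg : sgm < sgp)
  (Hh0 : h0 = 0) :
  (sgp * sgm - 2 * mup ^ 2 <= sgm ^ 2 ->
     unique_minimizer mum mup sgm sgp h0 h1 (h1 * sgm / (sgm ^ 2 + mup ^ 2))) /\
  (sgm ^ 2 < sgp * sgm - 2 * mup ^ 2 ->
     unique_minimizer mum mup sgm sgp h0 h1 (h1 / sgM sgm sgp)) /\
  (exists y, sgm <= y <= sgp /\
     forall x' y', inD mum mup sgm sgp x' y' ->
       psi mum mup sgm sgp h0 h1 mup y <= psi mum mup sgm sgp h0 h1 x' y').
Proof.
  subst h0; split; [| split].
  - apply minimizer_vertex; assumption.
  - apply minimizer_kink; assumption.
  - destruct (psi_side_minimum mum mup sgm sgp h1) as [y [Hy Hmin]]; try assumption.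
    exists y; split; [exact Hy |].
    intros x' y' Hxy'; pose proof Hxy' as [_ Hy'].
    eapply Rle_trans; [apply Hmin; exact Hy' |].
    apply psi_le_on_side; assumption.
Qed.
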